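(* Suppose the collective choice problem $\mathcal C$ satisfies Generic Finite Alternatives and the generalized amendment procedure is rich. For any game with at least $|X|-1$ rounds, the agenda setter obtains her favorite policy in every equilibrium regardless of the initial default if and only if $\mathcal C$ is $\mathcal D$-Manipulable.
   Context: Voters $N=\{1,\dots,n\}$ and a non-voting agenda setter $A$ choose from a finite policy space $X$; each player has a strict (antisymmetric), complete, transitive preference $\succsim_i$ with utility $u_i$ (Generic Finite Alternatives). A voting rule is any collection $\mathcal D\subseteq 2^N$ of winning coalitions; a proposal passes iff all voters in some $D\in\mathcal D$ approve it. $\mathcal C$ is $\mathcal D$-Manipulable if for every policy $x$ other than the agenda setter's favorite there exist $y$ and $D\in\mathcal D$ with $y\succ_A x$ and $y\succ_i x$ for all $i\in D$. Generalized amendment procedure with $T$ rounds: initial default $x^0$; in round $t$ the agenda setter proposes $(a^t,i)$ from a feasible set $X(h)\subseteq X\times\{0,1\}$ that may depend on the history $h$; if it passes and $i=0$, $a^t$ becomes the next default; if it passes and $i=1$, deliberation ends and $a^t$ is implemented; if rejected, the default is unchanged; absent adjournment the default after round $T$ is implemented. Rich: at every history $h$, $X(h)\subseteq X\times\{0\}$ or $X(h)\subseteq X\times\{1\}$. Equilibrium: subgame perfect equilibrium with as-if-pivotal voting. *)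

From mathcomp Require Import all_boot.
Set Implicit Arguments. Unset Strict Implicit. Unset Printing Implicit Defensive.

(* A round: proposal (a, i) with i = true meaning "adjourn" (i = 1) and
   i = false meaning "amend" (i = 0), together with whether it passed. *)
Definition round (X : Type) := ((X * bool) * bool)%type.
Definition hist (X : Type) := seq (round X).

Definition ended (X : Type) (h : hist X) : bool :=
  has (fun r : round X => r.1.2 && r.2) h.

Fixpoint settle (X : Type) (d : X) (h : hist X) : X :=
  match h with
  | [::] => d
  | r :: h' => if r.2 then (if r.1.2 then r.1.1 else settle r.1.1 h')
               else settle d h'
  end.

Definition passes (n : nat) (D : {set {set 'I_n}}) (v : 'I_n -> bool) : bool :=
  [exists S in D, [forall i in S, v i]].

Record profile (n : nat) (X : Type) := Profile {
  setter : hist X -> X * bool;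
  vote : 'I_n -> hist X -> X * bool -> bool }.

Fixpoint play (n : nat) (X : Type) (D : {set {set 'I_n}}) (x0 : X)
    (s : profile n X) (k : nat) (h : hist X) : X :=
  match k with
  | 0 => settle x0 h
  | k'.+1 => if ended h then settle x0 h else
      let p := setter s h in
      play D x0 s k' (rcons h (p, passes D (fun i => vote s i h p)))
  end.

Definition outcome (n : nat) (X : Type) (D : {set {set 'I_n}}) (T : nat)
    (x0 : X) (s : profile n X) (h : hist X) : X :=
  play D x0 s (T - size h) h.

Definition valid (X : finType) (feas : hist X -> {set X * bool}) (h : hist X) : Prop :=
  forall (h1 : hist X) (r : round X) (h2 : hist X),
    h = h1 ++ r :: h2 -> r.1 \in feas h1.

Definition node (X : finType) (feas : hist X -> {set X * bool}) (T : nat)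
    (h : hist X) : Prop :=
  valid feas h /\ size h < T /\ ~~ ended h.

Definition feasible_setter (X : finType) (feas : hist X -> {set X * bool})
    (T : nat) (sA : hist X -> X * bool) : Prop :=
  forall h, node feas T h -> sA h \in feas h.

Definition with_setter (n : nat) (X : Type) (s : profile n X)
    (sA : hist X -> X * bool) : profile n X := Profile sA (vote s).

Definition with_voter (n : nat) (X : Type) (s : profile n X) (i : 'I_n)
    (vi : hist X -> X * bool -> bool) : profile n X :=
  Profile (setter s) (fun j => if j == i then vi else vote s j).

Definition vote_outcome (n : nat) (X : Type) (D : {set {set 'I_n}}) (T : nat)
    (x0 : X) (s : profile n X) (h : hist X) (p : X * bool) : X :=
  outcome D T x0 s (rcons h (p, passes D (fun j => vote s j h p))).

(* Subgame perfect equilibrium with as-if-pivotal voting. *)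
Definition equilibrium (n : nat) (X : finType) (uA : X -> nat)
    (u : 'I_n -> X -> nat) (D : {set {set 'I_n}})
    (feas : hist X -> {set X * bool}) (T : nat) (x0 : X) (s : profile n X) : Prop :=
  [/\ feasible_setter feas T (setter s),
      (forall h, node feas T h -> forall sA', feasible_setter feas T sA' ->
         uA (outcome D T x0 (with_setter s sA') h) <= uA (outcome D T x0 s h)),
      (forall h p, node feas T h -> p \in feas h -> forall i vi,
         u i (vote_outcome D T x0 (with_voter s i vi) h p)
           <= u i (vote_outcome D T x0 s h p))
    & (* as-if-pivotal voting at every voting node *)
      (forall h p, node feas T h -> p \in feas h -> forall i,
         let yes := u i (outcome D T x0 s (rcons h (p, true))) in
         let no := u i (outcome D T x0 s (rcons h (p, false))) in
         (no < yes -> vote s i h p) /\ (yes < no -> ~~ vote s i h p))].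

(* Generic Finite Alternatives: strict (antisymmetric) preferences,
   represented by injective utilities. *)
Definition GFA (n : nat) (X : finType) (uA : X -> nat) (u : 'I_n -> X -> nat) : Prop :=
  injective uA /\ forall i, injective (u i).

Definition rich (X : finType) (feas : hist X -> {set X * bool}) : Prop :=
  forall h, (forall x, (x, false) \in feas h) \/ (forall x, (x, true) \in feas h).

Definition favorite (X : finType) (uA : X -> nat) (x : X) : Prop :=
  forall y, uA y <= uA x.

Definition manipulable (n : nat) (X : finType) (uA : X -> nat)
    (u : 'I_n -> X -> nat) (D : {set {set 'I_n}}) : Prop :=
  forall x, ~ favorite uA x ->
    exists y, exists2 S, S \in D & uA x < uA y /\ (forall i, i \in S -> u i x < u i y).

From mathcomp Require Import all_boot.
Set Implicit Arguments. Unset Strict Implicit. Unset Printing Implicit Defensive.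

(* Write [y >_C x] when a winning coalition strictly prefers [y] to [x], and
   let [improve x] be the setter's favorite among [x] and the policies [>_C x].
   By backward induction, every equilibrium with [k] rounds left and default [d]
   yields [improve^k d]: a rejected proposal leaves the continuation
   [improve^(k-1) d], as-if-pivotal voters pass a proposal only if a winning
   coalition prefers its continuation, and richness always lets the setter secure
   [improve] of it, by adjourning on it or by amending to [improve d].
   Manipulability says exactly that [improve] strictly benefits the setter at every
   policy other than her favorite, so [|X| - 1] rounds suffice to reach it; a
   non-favorite fixed point of [improve] is instead the outcome of the equilibrium
   started there. *)


Section Histories.

Variable X : Type.
Implicit Types (h : hist X) (r : round X).

Lemma ended_rcons h r : ended (rcons h r) = (r.1.2 && r.2) || ended h.
Proof. by rewrite /ended has_rcons. Qed.

Lemma settle_rcons d h r : ~~ ended h ->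
  settle d (rcons h r) = if r.2 then r.1.1 else settle d h.
Proof.
elim: h d => [|[[x b] c] h IH] d /=; first by case: r => [[? []] []].
rewrite /ended /= negb_or => /andP [Hc Hh].
by case: c Hc => /= [Hb|_]; [case: b Hb => //= _|]; rewrite IH.
Qed.

Lemma history_ind (T : nat) (P : hist X -> Prop) :
  (forall h, T <= size h \/ ended h -> P h) ->
  (forall h, size h < T -> ~~ ended h -> (forall r, P (rcons h r)) -> P h) ->
  forall h, P h.
Proof.
move=> Pend Pstep h; move Hk: (T - size h) => k.
elim: k h Hk => [|k IH] h Hk; first by apply: Pend; left; rewrite -subn_eq0 Hk.
case He: (ended h); first by apply: Pend; right.
apply: Pstep; first by rewrite -subn_gt0 Hk.
  by rewrite He.
by move=> r; apply: IH; rewrite size_rcons subnS Hk.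
Qed.

Variables (n : nat) (D : {set {set 'I_n}}) (T : nat) (x0 : X).

Lemma outcome_end s h : T <= size h \/ ended h -> outcome D T x0 s h = settle x0 h.
Proof.
rewrite /outcome => -[/eqP -> //|He].
by case: (T - size h) => //= k; rewrite He.
Qed.

Lemma outcome_step s h : size h < T -> ~~ ended h ->
  outcome D T x0 s h = vote_outcome D T x0 s h (setter s h).
Proof.
move=> Hs He; rewrite /vote_outcome /outcome size_rcons -(subnSK Hs) /=.
by rewrite (negbTE He).
Qed.

Lemma outcome_with_setter s sA h :
    (forall h', size h <= size h' -> sA h' = setter s h') ->
  outcome D T x0 (with_setter s sA) h = outcome D T x0 s h.
Proof.
rewrite /outcome; move: (T - size h) => k.
elim: k h => [|k IH] h Hagree //=.
case: ended => //; rewrite Hagree // IH // => h'.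
by rewrite size_rcons => /ltnW; apply: Hagree.
Qed.

End Histories.

Lemma valid_nil (X : finType) (feas : hist X -> {set X * bool}) : valid feas [::].
Proof. by case. Qed.

Lemma valid_rcons (X : finType) (feas : hist X -> {set X * bool}) (h : hist X) p b :
  valid feas h -> p \in feas h -> valid feas (rcons h (p, b)).
Proof.
move=> Hv Hp h1 r h2; case/lastP: h2 => [|h2 x].
  by rewrite cats1 => /rcons_inj [<- <-].
by rewrite -rcons_cons -rcons_cat => /rcons_inj [/Hv].
Qed.

Lemma favorite_iter (X : finType) (w : X -> nat) (f : X -> X) (x : X) k :
    (forall y, w y <= w (f y)) -> (forall y, ~ favorite w y -> w y < w (f y)) ->
  #|X|.-1 <= k -> favorite w (iter k f x).
Proof.
move=> Hge Hgt Hk; pose lower z := [set y | w y <= w z].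
have lowerT z : lower z = setT -> favorite w z.
  by move=> Hz y; have := in_setT y; rewrite -Hz inE.
have favorite_f z : favorite w z -> favorite w (f z).
  by move=> Hz y; apply: leq_trans (Hz y) (Hge z).
have Hgrow j : favorite w (iter j f x) \/ j < #|lower (iter j f x)|.
  elim: j => [|j [Hfav|IH]]; first by right; apply/card_gt0P; exists x; rewrite inE.
    by left; apply: favorite_f.
  have [/lowerT Hfav|HnT] := eqVneq (lower (iter j f x)) setT.
    by left; apply: favorite_f.
  right; apply: leq_ltn_trans IH (proper_card _); apply/properP; split.
    by apply/subsetP => y; rewrite !inE => /leq_trans; apply; apply: Hge.
  exists (iter j.+1 f x); rewrite !inE ?leqnn // -ltnNge; apply: Hgt.
  by move=> Hfav; apply: (negP HnT); apply/eqP/setP => y; rewrite !inE Hfav.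
have [//|Hcard] := Hgrow k; apply: lowerT; apply/eqP; rewrite eqEcard subsetT cardsT.
by apply: leq_trans (leqSpred _) (leq_trans _ Hcard); rewrite ltnS.
Qed.

Section AmendmentGame.

Variables (n : nat) (X : finType) (uA : X -> nat) (u : 'I_n -> X -> nat).
Variable D : {set {set 'I_n}}.
Implicit Types (x y : X) (v w : 'I_n -> bool).

Definition dominates y x : bool := [exists S in D, [forall i in S, u i x < u i y]].

Lemma dominatesP y x :
  reflect (exists2 S, S \in D & forall i, i \in S -> u i x < u i y) (dominates y x).
Proof.
apply: (iffP existsP) => [[S /andP [HS /forallP HSyx]]|[S HS HSyx]]; exists S => //.
  by move=> i; apply/implyP.
by rewrite HS; apply/forallP => i; apply/implyP/HSyx.
Qed.

Definition improve x : X := [arg max_(y > x | (y == x) || dominates y x) uA y].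

Lemma improve_ge x : uA x <= uA (improve x).
Proof.
rewrite /improve; case: arg_maxnP => [|y _ Hmax]; rewrite ?eqxx //.
by apply: Hmax; rewrite eqxx.
Qed.

Lemma dominates_le_improve x y : dominates y x -> uA y <= uA (improve x).
Proof.
move=> Hyx; rewrite /improve; case: arg_maxnP => [|z _ Hmax]; rewrite ?eqxx //.
by apply: Hmax; rewrite Hyx orbT.
Qed.

Lemma improveP x : improve x = x \/ dominates (improve x) x.
Proof.
rewrite /improve; case: arg_maxnP => [|z /orP [/eqP ->|Hdom] _]; rewrite ?eqxx //.
  by left.
by right.
Qed.

Lemma improve_moves_up x : injective uA -> improve x != x ->
  uA x < uA (improve x) /\ dominates (improve x) x.
Proof.
move=> injA Hmove; case: (improveP x) => [Hfix|Hdom]; first by rewrite Hfix eqxx in Hmove.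
split=> //; rewrite ltn_neqAle improve_ge andbT.
by apply/eqP => /injA Hfix; rewrite -Hfix eqxx in Hmove.
Qed.

Lemma manipulable_improve x :
  manipulable uA u D -> ~ favorite uA x -> uA x < uA (improve x).
Proof.
move=> Hman /Hman [y [S HS [Hxy HSxy]]]; apply: leq_trans Hxy (dominates_le_improve _).
by apply/dominatesP; exists S.
Qed.

Lemma passes_mono v w : (forall i, v i -> w i) -> passes D v -> passes D w.
Proof.
move=> Hvw /existsP [S /andP [HS /forallP HSv]]; apply/existsP; exists S.
by rewrite HS; apply/forallP => i; apply/implyP => /(implyP (HSv i)) /Hvw.
Qed.

(* [f b] is the continuation of a vote with result [b]. *)
Lemma vote_le_improve (f : bool -> X) v :
    (forall i, v i -> u i (f false) < u i (f true)) ->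
  uA (f (passes D v)) <= uA (improve (f false)).
Proof.
move=> Hv; case Hpass: (passes D v); last exact: improve_ge.
apply/dominates_le_improve/(passes_mono _ Hpass); exact: Hv.
Qed.

Lemma vote_le_improve_weak (f : bool -> X) v :
    (forall i, injective (u i)) -> (forall i, v i -> u i (f false) <= u i (f true)) ->
  uA (f (passes D v)) <= uA (improve (f false)).
Proof.
move=> injU Hv; case: (eqVneq (f true) (f false)) => [Heq|Hneq].
  by case: (passes D v); rewrite ?Heq improve_ge.
apply: vote_le_improve => i /Hv; rewrite leq_eqVlt => /orP [/eqP /injU Heq|//].
by rewrite Heq eqxx in Hneq.
Qed.

Lemma vote_eq_improve (f : bool -> X) v :
    f true = improve (f false) -> (forall i, u i (f false) < u i (f true) -> v i) ->
  f (passes D v) = f true.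
Proof.
move=> Himp Hv; case: (improveP (f false)) => [Hfix|Hdom].
  by case: (passes D v); rewrite // Himp Hfix.
suff -> : passes D v by [].
apply: passes_mono Hdom => i; rewrite -Himp; exact: Hv.
Qed.

Lemma sincere_vote_dominant (f : bool -> X) i v w :
    v i = (u i (f false) < u i (f true)) -> (forall j, j != i -> w j = v j) ->
  u i (f (passes D w)) <= u i (f (passes D v)).
Proof.
move=> Hvi Hwv.
have [Hi|Hi] := boolP (v i).
  have Hm j : w j -> v j by case: (eqVneq j i) => [->|/Hwv ->].
  case Hw: (passes D w); first by rewrite (passes_mono Hm Hw).
  by case: (passes D v) => //; rewrite Hvi in Hi; exact: ltnW.
have Hm j : v j -> w j.
  by case: (eqVneq j i) => [->|/Hwv -> //]; rewrite (negbTE Hi).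
case Hv: (passes D v); first by rewrite (passes_mono Hm Hv).
by case: (passes D w) => //; rewrite leqNgt -Hvi.
Qed.

Variables (feas : hist X -> {set X * bool}) (T : nat) (x0 : X).
Implicit Type h : hist X.

Definition value h : X :=
  if ended h then settle x0 h else iter (T - size h) improve (settle x0 h).

Lemma value_end h : T <= size h \/ ended h -> value h = settle x0 h.
Proof. by rewrite /value; case: ended => // -[/eqP -> //|]. Qed.

Lemma value_nil : value [::] = iter T improve x0.
Proof. by rewrite /value /= subn0. Qed.

Lemma value_reject h p : ~~ ended h ->
  value (rcons h (p, false)) = iter (T - size h).-1 improve (settle x0 h).
Proof.
move=> He; rewrite /value ended_rcons (negbTE He) andbF settle_rcons //.
by rewrite size_rcons subnS.
Qed.

Lemma value_accept h p : ~~ ended h ->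
  value (rcons h (p, true)) = if p.2 then p.1 else iter (T - size h).-1 improve p.1.
Proof.
move=> He; rewrite /value ended_rcons (negbTE He) andbT orbF settle_rcons //=.
by case: p.2; rewrite // size_rcons subnS.
Qed.

Lemma value_node h p : size h < T -> ~~ ended h ->
  value h = improve (value (rcons h (p, false))).
Proof.
move=> Hs He; rewrite value_reject // /value (negbTE He) -iterS prednK //.
by rewrite subn_gt0.
Qed.

(* Either proposal, if accepted, leads to [value h]; richness makes one of them feasible. *)
Definition improving_proposal h : X * bool :=
  if [forall x, (x, true) \in feas h] then (value h, true)
  else (improve (settle x0 h), false).

Lemma improving_proposal_feasible h : rich feas -> improving_proposal h \in feas h.
Proof.
rewrite /improving_proposal => /(_ h) Hrich.
case: ifP => [/forallP //|/negP Hadj]; case: Hrich => // Hadj'.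
by case: Hadj; apply/forallP.
Qed.

Lemma value_accept_improving_proposal h : size h < T -> ~~ ended h ->
  value (rcons h (improving_proposal h, true)) = value h.
Proof.
move=> Hs He; rewrite /improving_proposal; case: ifP => _; rewrite value_accept //=.
by rewrite -iterSr prednK ?subn_gt0 // /value (negbTE He).
Qed.

Definition value_profile : profile n X :=
  Profile improving_proposal
    (fun i h p => u i (value (rcons h (p, false))) < u i (value (rcons h (p, true)))).

Lemma value_profile_outcome h : outcome D T x0 value_profile h = value h.
Proof.
elim/(@history_ind X T): h => [h Hend|h Hs He IH].
  by rewrite outcome_end // value_end.
rewrite outcome_step // /vote_outcome IH -[RHS](value_accept_improving_proposal Hs He).
apply: (vote_eq_improve (f := fun b => value (rcons h (improving_proposal h, b)))) => //=.
by rewrite value_accept_improving_proposal // -value_node.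
Qed.

Lemma value_profile_setter_deviation sA h :
  uA (outcome D T x0 (with_setter value_profile sA) h) <= uA (value h).
Proof.
elim/(@history_ind X T): h => [h Hend|h Hs He IH].
  by rewrite outcome_end // value_end.
rewrite outcome_step //; apply: leq_trans (IH _) _.
rewrite [value h](value_node (sA h)) //.
by apply: (vote_le_improve (f := fun b => value (rcons h (sA h, b)))).
Qed.

Lemma value_profile_voter_deviation i vi h :
  u i (outcome D T x0 (with_voter value_profile i vi) h) <= u i (value h).
Proof.
elim/(@history_ind X T): h => [h Hend|h Hs He IH].
  by rewrite outcome_end // value_end.
rewrite outcome_step //; apply: leq_trans (IH _) _.
rewrite -(value_profile_outcome h) outcome_step // /vote_outcome value_profile_outcome.
set p := improving_proposal h.
apply: (sincere_vote_dominant (f := fun b => value (rcons h (p, b)))) => //.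
by move=> j /negbTE /= ->.
Qed.

Lemma value_profile_equilibrium :
  rich feas -> equilibrium uA u D feas T x0 value_profile.
Proof.
move=> Hrich; split.
- by move=> h _; apply: improving_proposal_feasible.
- by move=> h _ sA _; rewrite value_profile_outcome; apply: value_profile_setter_deviation.
- move=> h p _ _ i vi; rewrite /vote_outcome value_profile_outcome.
  apply: leq_trans (value_profile_voter_deviation _ _ _) _.
  apply: (sincere_vote_dominant (f := fun b => value (rcons h (p, b)))) => //.
  by move=> j /negbTE /= ->.
- move=> h p _ _ i /=; rewrite !value_profile_outcome; split=> // Hlt.
  by rewrite -leqNgt ltnW.
Qed.

Section Equilibrium.

Hypotheses (injA : injective uA) (injU : forall i, injective (u i)) (Hrich : rich feas).
Variable s : profile n X.
Hypothesis Heq : equilibrium uA u D feas T x0 s.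

Lemma equilibrium_setter_optimal h p : node feas T h -> p \in feas h ->
  uA (vote_outcome D T x0 s h p) <= uA (outcome D T x0 s h).
Proof.
have [Hfeas Hsetter _ _] := Heq; move=> Hnode Hp; have [_ [Hs He]] := Hnode.
pose sA h' := if h' == h then p else setter s h'.
have HsA : feasible_setter feas T sA.
  by move=> h' Hn'; rewrite /sA; case: eqP => [->|_]; [exact: Hp | exact: Hfeas].
have := Hsetter h Hnode sA HsA.
rewrite outcome_step // /vote_outcome /=.
have -> : sA h = p by rewrite /sA eqxx.
rewrite outcome_with_setter // => h'.
by rewrite /sA; case: (eqVneq h' h) => [->|//]; rewrite size_rcons ltnn.
Qed.

Lemma equilibrium_outcome h : valid feas h -> outcome D T x0 s h = value h.
Proof.
elim/(@history_ind X T): h => [h Hend _|h Hs He IH Hv].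
  by rewrite outcome_end // value_end.
have Hnode : node feas T h by [].
have [Hfeas _ _ Hpivot] := Heq.
have IHp p b : p \in feas h -> outcome D T x0 s (rcons h (p, b)) = value (rcons h (p, b)).
  by move=> Hp; apply/IH/valid_rcons.
apply: injA; apply/eqP; rewrite eqn_leq; apply/andP; split.
- have Hp := Hfeas h Hnode.
  rewrite outcome_step // /vote_outcome IHp // [value h](value_node (setter s h)) //.
  apply: (vote_le_improve_weak (f := fun b => value (rcons h (setter s h, b)))) => // i Hi.
  have [_ Hno] := Hpivot h _ Hnode Hp i; rewrite /= !IHp // in Hno.
  by rewrite leqNgt; exact: (contraL Hno Hi).
- set p := improving_proposal h.
  have Hp : p \in feas h := improving_proposal_feasible h Hrich.
  apply: leq_trans (equilibrium_setter_optimal Hnode Hp); rewrite /vote_outcome IHp //.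
  rewrite (vote_eq_improve (f := fun b => value (rcons h (p, b)))).
  + by rewrite value_accept_improving_proposal.
  + by rewrite value_accept_improving_proposal // -value_node.
  move=> i Hi; have [Hyes _] := Hpivot h p Hnode Hp i.
  by apply: Hyes; rewrite /= !IHp.
Qed.

End Equilibrium.

End AmendmentGame.

Theorem corollary1 (n : nat) (X : finType) (uA : X -> nat) (u : 'I_n -> X -> nat)
    (D : {set {set 'I_n}}) (feas : hist X -> {set X * bool}) (T : nat) :
  GFA uA u -> rich feas -> #|X|.-1 <= T ->
  ((forall (x0 : X) (s : profile n X), equilibrium uA u D feas T x0 s ->
      favorite uA (outcome D T x0 s [::]))
   <-> manipulable uA u D).
Proof.
move=> [injA injU] Hrich HT; split=> [Hfav x Hnfav | Hman x0 s Heq].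
- case: (eqVneq (improve uA u D x) x) => [Hfix|Hmove].
    case: Hnfav; have := Hfav x _ (value_profile_equilibrium uA u D T x Hrich).
    by rewrite value_profile_outcome value_nil iter_fix.
  have [Hlt /dominatesP [S HS HSx]] := improve_moves_up injA Hmove.
  by exists (improve uA u D x), S.
- rewrite (equilibrium_outcome injA injU Hrich Heq (valid_nil feas)) value_nil.
  apply: favorite_iter => // [|y]; first exact: improve_ge.
  exact: manipulable_improve.
Qed.
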